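(* Let $\nu: K_1 \to K_2$ be an isomorphism and $\bar{\mathcal{E}}$ be the central extension $1\to H_1\times H_2\to \bar G\xrightarrow{\beta} K_1\to 1$. Then $\ker \Delta = \tilde{M}(\nu)^{-1}(\ker \Delta_2)\cap \ker \Delta_1$, where $\Delta: \tilde{M}(K_1)\to {^M[\bar{G},\bar{G}]}$.
   Context: For a multiplicative Lie algebra $G$, ${^M[G,G]}$ denotes the ideal $(G\star G)[G,G]$, and $\mathcal{Z}(G)=LZ(G)\cap Z(G)$ (intersection of the Lie center and the group center). Let $\mathcal{E}_i \equiv 1\to H_i\xrightarrow{i} G_i\xrightarrow{\beta_i} K_i\to 1$, $i=1,2$, be two central extensions of multiplicative Lie algebras (so $H_i\subseteq\mathcal{Z}(G_i)$), and $\nu:K_1\to K_2$ a homomorphism. Let $\bar G=G_1\times_{K_2}G_2=\{(g_1,g_2): g_i\in G_i,\ \nu(\beta_1(g_1))=\beta_2(g_2)\}$, a subalgebra of $G_1\times G_2$, and $\beta(g_1,g_2)=\beta_1(g_1)$; then $\bar{\mathcal{E}}\equiv 1\to H_1\times H_2\to\bar G\xrightarrow{\beta}K_1\to 1$ is a central extension. $\tilde M(K)=\frac{{^M[F,F]}\cap R}{{^M[R,F]}}$ is the Schur multiplier (for a free presentation $1\to R\to F\to K\to1$), a covariant functor, so $\nu$ induces $\tilde M(\nu)$. For any central extension $1\to H\to G\xrightarrow{\beta}K\to1$ there is a homomorphism $\tilde M(K)\to{^M[G,G]}$ making $1\to\ker\to\tilde M(K)\to{^M[G,G]}\xrightarrow{\beta|}{^M[K,K]}\to1$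 exact; $\Delta_i:\tilde M(K_i)\to{^M[G_i,G_i]}$ and $\Delta:\tilde M(K_1)\to{^M[\bar G,\bar G]}$ denote these maps for $\mathcal{E}_i$ and $\bar{\mathcal{E}}$ respectively. *)

From Stdlib Require Import ProofIrrelevance.
Set Implicit Arguments.
Unset Strict Implicit.

Record MLie := {
  car :> Type;
  mmul : car -> car -> car;
  minv : car -> car;
  mone : car;
  mstar : car -> car -> car;
  m_assoc : forall x y z, mmul x (mmul y z) = mmul (mmul x y) z;
  m_mul1 : forall x, mmul mone x = x;
  m_mulx1 : forall x, mmul x mone = x;
  m_invl : forall x, mmul (minv x) x = mone;
  m_invr : forall x, mmul x (minv x) = mone;
  s_xx : forall x, mstar x x = mone;
  s_r : forall x y z,
    mstar x (mmul y z) = mmul (mstar x y) (mmul (mmul y (mstar x z)) (minv y));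
  s_l : forall x y z,
    mstar (mmul x y) z = mmul (mmul (mmul x (mstar y z)) (minv x)) (mstar x z);
  s_jac : forall x y z,
    mmul (mmul (mstar (mstar x y) (mmul (mmul y z) (minv y)))
               (mstar (mstar y z) (mmul (mmul z x) (minv z))))
         (mstar (mstar z x) (mmul (mmul x y) (minv x))) = mone;
  s_conj : forall x y z,
    mmul (mmul z (mstar x y)) (minv z)
    = mstar (mmul (mmul z x) (minv z)) (mmul (mmul z y) (minv z))
}.

Arguments mmul {m}. Arguments minv {m}. Arguments mone {m}. Arguments mstar {m}.

Definition gcomm (G : MLie) (a b : G) : G :=
  mmul (mmul (mmul a b) (minv a)) (minv b).

Definition mhom (G K : MLie) (f : G -> K) : Prop :=
  (forall x y, f (mmul x y) = mmul (f x) (f y)) /\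
  (forall x y, f (mstar x y) = mstar (f x) (f y)) /\
  f mone = mone /\ (forall x, f (minv x) = minv (f x)).

Definition surj (A B : Type) (f : A -> B) := forall b, exists a, f a = b.
Definition inj (A B : Type) (f : A -> B) := forall a a', f a = f a' -> a = a'.

Definition miso (G K : MLie) (f : G -> K) : Prop := mhom f /\ inj f /\ surj f.

(** ^M[A,B] = (A ⋆ B)[A,B] : the subgroup generated by all a⋆b and [a,b]. *)
Inductive Mcomm (G : MLie) (A B : G -> Prop) : G -> Prop :=
| mc_one : Mcomm A B mone
| mc_star a b : A a -> B b -> Mcomm A B (mstar a b)
| mc_comm a b : A a -> B b -> Mcomm A B (gcomm a b)
| mc_mul x y : Mcomm A B x -> Mcomm A B y -> Mcomm A B (mmul x y)
| mc_inv x : Mcomm A B x -> Mcomm A B (minv x).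

Definition fullset (G : MLie) : G -> Prop := fun _ => True.

Definition ZZ (G : MLie) (x : G) : Prop :=
  (forall g : G, mmul x g = mmul g x) /\ (forall g : G, mstar x g = mone).

Definition central_ext (H G K : MLie) (i : H -> G) (beta : G -> K) : Prop :=
  mhom i /\ mhom beta /\ inj i /\ surj beta /\
  (forall g, beta g = mone <-> exists h, i h = g) /\
  (forall h, ZZ (i h)).

Definition is_free (F : MLie) : Prop :=
  exists (X : Type) (iota : X -> F),
    forall (L : MLie) (f : X -> L),
      exists g : F -> L, mhom g /\ (forall x, g (iota x) = f x) /\
        (forall g' : F -> L, mhom g' -> (forall x, g' (iota x) = f x) ->
           forall y, g' y = g y).

Definition free_presentation (F K : MLie) (pi : F -> K) : Prop :=
  is_free F /\ mhom pi /\ surj pi.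

(** representatives of elements of \tilde M(K) = (^M[F,F] ∩ R)/^M[R,F] *)
Definition Mrep (F K : MLie) (pi : F -> K) (x : F) : Prop :=
  Mcomm (@fullset F) (@fullset F) x /\ pi x = mone.

Definition is_lift (F G K : MLie) (phi : F -> G) (beta : G -> K) (pi : F -> K) : Prop :=
  mhom phi /\ (forall x, beta (phi x) = pi x).

Section Fibre.
Variables (G1 G2 K1 K2 : MLie) (b1 : G1 -> K1) (b2 : G2 -> K2) (nu : K1 -> K2).
Hypotheses (hb1 : mhom b1) (hb2 : mhom b2) (hnu : mhom nu).

Definition fcar := { p : G1 * G2 | nu (b1 (fst p)) = b2 (snd p) }.

Lemma fp_mul_ok (p q : fcar) :
  nu (b1 (fst (mmul (fst (proj1_sig p)) (fst (proj1_sig q)),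
               mmul (snd (proj1_sig p)) (snd (proj1_sig q)))))
  = b2 (snd (mmul (fst (proj1_sig p)) (fst (proj1_sig q)),
               mmul (snd (proj1_sig p)) (snd (proj1_sig q)))).
Proof.
destruct p as [[a b] e], q as [[c d] f]; simpl in *.
destruct hb1 as [m1 _], hb2 as [m2 _], hnu as [m3 _].
rewrite m1, m3, m2, e, f; reflexivity.
Qed.

Definition fmul (p q : fcar) : fcar := exist _ _ (fp_mul_ok p q).

Lemma fp_star_ok (p q : fcar) :
  nu (b1 (fst (mstar (fst (proj1_sig p)) (fst (proj1_sig q)),
               mstar (snd (proj1_sig p)) (snd (proj1_sig q)))))
  = b2 (snd (mstar (fst (proj1_sig p)) (fst (proj1_sig q)),
               mstar (snd (proj1_sig p)) (snd (proj1_sig q)))).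
Proof.
destruct p as [[a b] e], q as [[c d] f]; simpl in *.
destruct hb1 as [_ [s1 _]], hb2 as [_ [s2 _]], hnu as [_ [s3 _]].
rewrite s1, s3, s2, e, f; reflexivity.
Qed.

Definition fstar (p q : fcar) : fcar := exist _ _ (fp_star_ok p q).

Lemma fp_inv_ok (p : fcar) :
  nu (b1 (fst (minv (fst (proj1_sig p)), minv (snd (proj1_sig p)))))
  = b2 (snd (minv (fst (proj1_sig p)), minv (snd (proj1_sig p)))).
Proof.
destruct p as [[a b] e]; simpl in *.
destruct hb1 as [_ [_ [_ i1]]], hb2 as [_ [_ [_ i2]]], hnu as [_ [_ [_ i3]]].
rewrite i1, i3, i2, e; reflexivity.
Qed.

Definition finv (p : fcar) : fcar := exist _ _ (fp_inv_ok p).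

Lemma fp_one_ok : nu (b1 (fst ((@mone G1), (@mone G2)))) = b2 (snd ((@mone G1), (@mone G2))).
Proof.
destruct hb1 as [_ [_ [o1 _]]], hb2 as [_ [_ [o2 _]]], hnu as [_ [_ [o3 _]]].
simpl; rewrite o1, o3, o2; reflexivity.
Qed.

Definition fone : fcar := exist _ _ fp_one_ok.

Lemma fext (p q : fcar) : proj1_sig p = proj1_sig q -> p = q.
Proof.
destruct p as [x e], q as [y f]; simpl; intros ->.
f_equal; apply proof_irrelevance.
Qed.

Ltac fpsolve :=
  repeat match goal with p : fcar |- _ => destruct p as [[? ?] ?] end;
  apply fext; simpl; f_equal.

Definition fibre_prod : MLie.
Proof.
refine (@Build_MLie fcar fmul finv fone fstar _ _ _ _ _ _ _ _ _ _);
  intros; fpsolve;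
  first [ apply m_assoc | apply m_mul1 | apply m_mulx1 | apply m_invl
        | apply m_invr | apply s_xx | apply s_r | apply s_l | apply s_jac
        | apply s_conj ].
Defined.

Definition fibre_beta (p : fibre_prod) : K1 := b1 (fst (proj1_sig (p : fcar))).

End Fibre.

(** Two lifts of the same map [F -> K] along a central extension differ by
    central elements, and central elements are invisible to both [⋆] and group
    commutators; hence the two lifts agree on ^M[F,F].  The two components of
    the lift defining [Δ] lift [p1] along [β1] and [ν ∘ p1] along [β2], so on
    ^M[F,F] they coincide with [Δ1] and with [Δ2 ∘ M̃(ν)], and an element of the
    fibre product is trivial exactly when both components are. *)
From Stdlib Require Import Setoid.
Set Implicit Arguments.
Unset Strict Implicit.

Local Infix "•" := mmul (at level 40, left associativity).
Local Infix "⋆" := mstar (at level 40, no associativity).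
Local Notation "x ⁻¹" := (minv x) (at level 2, format "x ⁻¹").

Section GroupFacts.
Variable G : MLie.
Implicit Types a b c x y z : G.

Lemma mul_eq1_inv a b : a • b = mone -> b = a⁻¹.
Proof.
intro h. rewrite <- (m_mul1 b), <- (m_invl a), <- m_assoc, h, m_mulx1. reflexivity.
Qed.

Lemma inv_mul a b : (a • b)⁻¹ = b⁻¹ • a⁻¹.
Proof.
symmetry. apply mul_eq1_inv.
rewrite <- !m_assoc, (m_assoc b), m_invr, m_mul1, m_invr. reflexivity.
Qed.

Lemma mul_left_cancel x a b : x • a = x • b -> a = b.
Proof.
intro h. rewrite <- (m_mul1 a), <- (m_mul1 b), <- (m_invl x), <- !m_assoc, h.
reflexivity.
Qed.

Lemma conj_mul x a b : (x • a • x⁻¹) • (x • b • x⁻¹) = x • (a • b) • x⁻¹.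
Proof. rewrite <- !m_assoc, (m_assoc x⁻¹ x), m_invl, m_mul1. reflexivity. Qed.

Lemma conj_one x : x • mone • x⁻¹ = mone.
Proof. rewrite m_mulx1, m_invr. reflexivity. Qed.

Lemma conj_eq1 x a : x • a • x⁻¹ = mone -> a = mone.
Proof.
intro h. apply mul_left_cancel with (x := x).
rewrite m_mulx1, <- (m_mulx1 (x • a)), <- (m_invl x), m_assoc, h, m_mul1.
reflexivity.
Qed.

(* Expand [(x y) ⋆ (x y) = 1] with both distributivity axioms. *)
Lemma star_mul_swap x y : (y ⋆ x) • (x ⋆ y) = mone.
Proof.
pose proof (s_xx (x • y)) as h.
rewrite s_l, s_r, s_r, !s_xx, conj_one, m_mulx1, m_mul1, conj_mul in h.
exact (conj_eq1 h).
Qed.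

Lemma star_eq1_swap x c : c ⋆ x = mone -> x ⋆ c = mone.
Proof. intro h. rewrite <- (star_mul_swap x c), h, m_mul1. reflexivity. Qed.

Lemma star_mul_centrall x c z : ZZ c -> (x • c) ⋆ z = x ⋆ z.
Proof. intros [_ hc]. rewrite s_l, hc, conj_one, m_mul1. reflexivity. Qed.

Lemma star_mul_centralr x c z : ZZ c -> z ⋆ (x • c) = z ⋆ x.
Proof.
intros [_ hc]. rewrite s_r, (star_eq1_swap (hc z)), conj_one, m_mulx1.
reflexivity.
Qed.

Lemma gcomm_mul_centrall x c z : ZZ c -> gcomm (x • c) z = gcomm x z.
Proof.
intros [hc _]. unfold gcomm. rewrite inv_mul, <- !m_assoc, (m_assoc c z), hc.
rewrite <- !m_assoc, (m_assoc c c⁻¹), m_invr, m_mul1. reflexivity.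
Qed.

Lemma gcomm_mul_centralr x c z : ZZ c -> gcomm z (x • c) = gcomm z x.
Proof.
intros [hc _]. unfold gcomm. rewrite inv_mul, <- !m_assoc, (m_assoc c z⁻¹), hc.
rewrite <- !m_assoc, (m_assoc c c⁻¹), m_invr, m_mul1. reflexivity.
Qed.

End GroupFacts.

Lemma mhom_comp (A B C : MLie) (f : A -> B) (g : B -> C) :
  mhom f -> mhom g -> mhom (fun x => g (f x)).
Proof.
intros [fm [fs [f1 fi]]] [gm [gs [g1 gi]]].
split; [| split; [| split]]; intros; rewrite ?fm, ?fs, ?f1, ?fi; auto.
Qed.

Lemma is_lift_comp (F1 F2 G K1 K2 : MLie) (mu : F1 -> F2) (p1 : F1 -> K1)
    (nu : K1 -> K2) (p2 : F2 -> K2) (phi : F2 -> G) (beta : G -> K2) :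
  is_lift mu p2 (fun x => nu (p1 x)) -> is_lift phi beta p2 ->
  is_lift (fun x => phi (mu x)) beta (fun x => nu (p1 x)).
Proof.
intros [hmu lmu] [hphi lphi]. split.
- exact (mhom_comp hmu hphi).
- intro x. rewrite lphi, lmu. reflexivity.
Qed.

Section CentralExtensionLifts.
Variables (H G K F : MLie) (i : H -> G) (beta : G -> K) (pi : F -> K).
Hypothesis E : central_ext i beta.

Lemma lifts_differ_central (phi phi' : F -> G) :
  is_lift phi beta pi -> is_lift phi' beta pi ->
  forall a, exists c, ZZ c /\ phi' a = phi a • c.
Proof.
destruct E as [_ [[bm [_ [_ bi]]] [_ [_ [ker zz]]]]].
intros [_ l] [_ l'] a. exists ((phi a)⁻¹ • phi' a). split.
- destruct (proj1 (ker ((phi a)⁻¹ • phi' a))) as [h <-]; [| apply zz].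
  rewrite bm, bi, l, l', m_invl. reflexivity.
- rewrite m_assoc, m_invr, m_mul1. reflexivity.
Qed.

Lemma lifts_agree_on_Mcomm (phi phi' : F -> G) :
  is_lift phi beta pi -> is_lift phi' beta pi ->
  forall x, Mcomm (@fullset F) (@fullset F) x -> phi x = phi' x.
Proof.
intros h h'. pose proof (lifts_differ_central h h') as dec.
destruct h as [[pm [ps [p1 pinv]]] _], h' as [[qm [qs [q1 qinv]]] _].
induction 1 as [| a b _ _ | a b _ _ | x y _ IHx _ IHy | x _ IHx].
- rewrite p1, q1. reflexivity.
- rewrite ps, qs.
  destruct (dec a) as [c [hc ->]], (dec b) as [e [he ->]].
  rewrite star_mul_centrall, star_mul_centralr by assumption. reflexivity.
- unfold gcomm. rewrite !pm, !qm, !pinv, !qinv.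
  fold (gcomm (phi a) (phi b)) (gcomm (phi' a) (phi' b)).
  destruct (dec a) as [c [hc ->]], (dec b) as [e [he ->]].
  rewrite gcomm_mul_centrall, gcomm_mul_centralr by assumption. reflexivity.
- rewrite pm, qm, IHx, IHy. reflexivity.
- rewrite pinv, qinv, IHx. reflexivity.
Qed.

End CentralExtensionLifts.

Section FibreProductLifts.
Variables (G1 G2 K1 K2 F : MLie) (b1 : G1 -> K1) (b2 : G2 -> K2) (nu : K1 -> K2).
Hypotheses (hb1 : mhom b1) (hb2 : mhom b2) (hnu : mhom nu).
Variables (pi : F -> K1) (d : F -> fibre_prod hb1 hb2 hnu).
Hypothesis hd : is_lift d (fibre_beta (hb1:=hb1) (hb2:=hb2) (hnu:=hnu)) pi.

Lemma fibre_eq1 (p : fibre_prod hb1 hb2 hnu) :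
  p = mone <-> snd (proj1_sig p) = mone /\ fst (proj1_sig p) = mone.
Proof.
split.
- intros ->. split; reflexivity.
- destruct p as [[u v] e]. simpl. intros [-> ->]. apply fext. reflexivity.
Qed.

Lemma fibre_fst_lift : is_lift (fun x => fst (proj1_sig (d x))) b1 pi.
Proof.
destruct hd as [[dm [ds [d1 dinv]]] dl].
split; [split; [| split; [| split]] |]; intros;
  rewrite ?dm, ?ds, ?d1, ?dinv, <- ?dl; reflexivity.
Qed.

Lemma fibre_snd_lift : is_lift (fun x => snd (proj1_sig (d x))) b2 (fun x => nu (pi x)).
Proof.
destruct hd as [[dm [ds [d1 dinv]]] dl].
split; [split; [| split; [| split]] |]; intros; rewrite ?dm, ?ds, ?d1, ?dinv;
  try reflexivity.
rewrite <- dl. unfold fibre_beta. destruct (d x) as [p e]. symmetry. exact e.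
Qed.

End FibreProductLifts.

Theorem lemma4p17
  (H1 G1 K1 H2 G2 K2 : MLie)
  (i1 : H1 -> G1) (b1 : G1 -> K1) (i2 : H2 -> G2) (b2 : G2 -> K2)
  (E1 : central_ext i1 b1) (E2 : central_ext i2 b2)
  (nu : K1 -> K2) (hnu : miso nu)
  (hb1 : mhom b1) (hb2 : mhom b2) (hnuh : mhom nu)
  (F1 F2 : MLie) (p1 : F1 -> K1) (p2 : F2 -> K2)
  (P1 : free_presentation p1) (P2 : free_presentation p2)
  (* lift defining Delta_1 : \tilde M(K_1) -> ^M[G_1,G_1] *)
  (d1 : F1 -> G1) (hd1 : is_lift d1 b1 p1)
  (* lift defining Delta_2 : \tilde M(K_2) -> ^M[G_2,G_2] *)
  (d2 : F2 -> G2) (hd2 : is_lift d2 b2 p2)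
  (* lift of nu \o p1 defining \tilde M(nu) *)
  (mu : F1 -> F2) (hmu : is_lift mu p2 (fun x => nu (p1 x)))
  (* lift defining Delta : \tilde M(K_1) -> ^M[Gbar,Gbar] *)
  (d : F1 -> fibre_prod hb1 hb2 hnuh)
  (hd : is_lift d (fibre_beta (hb1:=hb1) (hb2:=hb2) (hnu:=hnuh)) p1) :
  forall x : F1, Mrep p1 x ->
    (d x = mone <-> (d2 (mu x) = mone /\ d1 x = mone)).
Proof.
intros x [hx _].
rewrite fibre_eq1.
rewrite (lifts_agree_on_Mcomm E1 (fibre_fst_lift hd) hd1 hx).
rewrite (lifts_agree_on_Mcomm E2 (fibre_snd_lift hd) (is_lift_comp hmu hd2) hx).
reflexivity.
Qed.
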